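(* Let $d\ge1$ and $L\ge2$ be integers and $W_1,\dots,W_L\in\mathbb{R}^{d\times d}$. Let $\alpha=\max\{\max_{1\le l\le L-1}\|W_l\|_2,\,1\}$, $\beta=\|W_L\|_2$, and $\phi=\max\{\|W_{L:1}\|_2,\,e/\sqrt{L},\,1\}$. Let $D_l=W_{l+1}^\intercal W_{l+1}-W_lW_l^\intercal$ for $l=1,\dots,L-1$, and suppose $\|D_l\|_2\le\delta$ for $l=1,\dots,L-2$ and $\|I+D_{L-1}\|_2\le\varepsilon$, where $\delta\le(2L^3\phi^2)^{-1}$ and $\varepsilon\le(4L^2)^{-1}$. Then $$\alpha^{2(L-1)}<L\phi^2\qquad\text{and}\qquad\alpha^{2(L-1)}\beta^2<2\phi^2.$$
   Context: $W_{L:1}=W_LW_{L-1}\cdots W_1$. $\|\cdot\|_2$ is the spectral norm; $e$ is Euler's number. *)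

From HB Require Import structures.
From mathcomp Require Import all_boot all_order all_algebra.
From mathcomp Require Import all_classical all_reals all_analysis.
Set Implicit Arguments. Unset Strict Implicit. Unset Printing Implicit Defensive.
Import Order.TTheory GRing.Theory Num.Theory.
Local Open Scope ring_scope.
Local Open Scope classical_set_scope.

Definition vnorm2 (R : realType) (n : nat) (x : 'cV[R]_n) : R :=
  Num.sqrt (\sum_(i < n) x i 0 ^+ 2).

Definition specnorm (R : realType) (m n : nat) (A : 'M[R]_(m, n)) : R :=
  sup [set r : R | exists x : 'cV[R]_n, vnorm2 x = 1 /\ r = vnorm2 (A *m x)].

Fixpoint mxprod (R : realType) (d : nat) (W : nat -> 'M[R]_d) (k : nat) : 'M[R]_d :=
  match k with
  | 0 => 1%:M
  | k'.+1 => W k'.+1 *m mxprod W k'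
  end.

From HB Require Import structures.
From mathcomp Require Import all_boot all_order all_algebra.
From mathcomp Require Import all_classical all_reals all_analysis.
From mathcomp Require Import ring lra.
Set Implicit Arguments. Unset Strict Implicit. Unset Printing Implicit Defensive.
Import Order.TTheory GRing.Theory Num.Theory.
Local Open Scope ring_scope.

(* Write n = L - 1, s = |W_1|^2 and b = s + (L - 2) delta.  Since
   W_{l+1}^T W_{l+1} = W_l W_l^T + D_l, the squared spectral norm grows by at
   most delta from one layer to the next, so alpha^2 <= max(1, b), and the last
   relation gives beta^2 <= b - 1 + eps.  Conversely, feed an almost maximising
   unit vector of W_1 through the network: by Cauchy-Schwarz and the same
   relations, each of the first n layers multiplies its squared norm by at least
   c = b - n/L^3 and the last one by c - 1 - eps, so phi^2 >= c^n (c - 1 - eps).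
   If b is close to 1, alpha^(2n) <= (1 + O(1/n))^n is at most e^(3/2) < e^2 <=
   L phi^2; otherwise Bernoulli's inequality compares b^n with c^n and the lower
   bound on phi^2 wins. *)

Section RealInequalities.
Variable R : realType.

Lemma exprn_le_expR (t : R) n : (0 < n)%N -> - n%:R <= t ->
  (1 + t / n%:R) ^+ n <= expR t.
Proof.
move=> n_gt0 t_ge; have n_pos : 0 < n%:R :> R by rewrite ltr0n.
have -> : expR t = expR (t / n%:R) ^+ n.
  by rewrite -expRM_natl mulrCA mulfV ?mulr1 // gt_eqF.
have : -1 <= t / n%:R by rewrite ler_pdivlMr // mulN1r.
by move=> ?; apply: lerXn2r; rewrite ?nnegrE ?expR_ge1Dx //; lra.
Qed.

Lemma bernoulli_mul_le1 (g : R) n : -1 <= g -> (1 + g) ^+ n * (1 - n%:R * g) <= 1.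
Proof.
move=> g_ge; elim: n => [|n IH]; first by rewrite mul0r subr0 mulr1.
have pow_ge0 : 0 <= (1 + g) ^+ n by apply: exprn_ge0; lra.
have step : (1 + g) * (1 - n.+1%:R * g) <= 1 - n%:R * g.
  by rewrite -natr1; have := sqr_ge0 g; have : 0 <= n%:R :> R by []; nra.
rewrite exprSr -mulrA; apply: le_trans IH; exact: ler_wpM2l.
Qed.

Lemma exprD_bernoulli_le (c g : R) n : 1 <= c -> 0 <= g ->
  (c + g) ^+ n * (1 - n%:R * g) <= c ^+ n.
Proof.
move=> c_ge1 g_ge0; have cn_ge0 : 0 <= c ^+ n by apply: exprn_ge0; lra.
have [neg|pos] := ltrP (1 - n%:R * g) 0.
  by apply: le_trans cn_ge0; apply: mulr_ge0_le0; [apply: exprn_ge0|]; lra.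
have pow_le : (c + g) ^+ n <= (c * (1 + g)) ^+ n.
  by apply: lerXn2r; rewrite ?nnegrE //; nra.
apply: (le_trans (ler_wpM2r pos pow_le)).
rewrite exprMn -mulrA -[leRHS]mulr1; apply: ler_wpM2l => //.
by apply: bernoulli_mul_le1; lra.
Qed.

Lemma expR1_sqr_le (L : nat) (phi : R) : (0 < L)%N ->
  expR 1 / Num.sqrt L%:R <= phi -> expR 1 ^+ 2 <= L%:R * phi ^+ 2.
Proof.
move=> L_gt0; have sL_pos : 0 < Num.sqrt L%:R :> R by rewrite sqrtr_gt0 ltr0n.
rewrite ler_pdivrMr // => le_phi.
rewrite -(sqr_sqrtr (ler0n R L)) -exprMn mulrC; apply: lerXn2r => //.
  by rewrite nnegrE ltW ?expR_gt0.
by rewrite nnegrE (le_trans _ le_phi) // ltW ?expR_gt0.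
Qed.

Lemma max0_drift_lt n (delta phi : R) : 1 <= phi ->
  delta <= (2 * n.+2%:R ^+ 3 * phi ^+ 2)^-1 ->
  2 * (n%:R * Num.max delta 0) < n.+1%:R * n.+2%:R^-1 ^+ 3.
Proof.
move=> phi_ge1 delta_le; set u3 : R := n.+2%:R^-1 ^+ 3.
have u3_pos : 0 < u3 by rewrite exprn_gt0 // invr_gt0 ltr0n.
have L3_pos : 0 < 2 * n.+2%:R ^+ 3 :> R by rewrite mulr_gt0 // exprn_gt0 // ltr0n.
have : Num.max delta 0 <= u3 / 2.
  rewrite /u3 exprVn mulrC -invfM ge_max invr_ge0 (ltW L3_pos) andbT.
  apply: le_trans delta_le _; have phi_gt0 : 0 < phi by lra.
  rewrite lef_pV2 ?posrE ?mulr_gt0 ?exprn_gt0 // ler_peMr ?(ltW L3_pos) //.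
  by nra.
by have := ler0n R n; rewrite -[n.+1%:R]natr1; nra.
Qed.

End RealInequalities.

Lemma bigmax_sqr_le (R : realDomainType) (I : Type) (r : seq I) (P : pred I)
    (F : I -> R) M :
  1 <= M -> (forall i, P i -> 0 <= F i /\ F i ^+ 2 <= M) ->
  (\big[Num.max/1]_(i <- r | P i) F i) ^+ 2 <= M.
Proof.
move=> M_ge1 F_le; suff [] : 0 <= \big[Num.max/1]_(i <- r | P i) F i /\
  (\big[Num.max/1]_(i <- r | P i) F i) ^+ 2 <= M by [].
elim/big_ind: _ => //; first by rewrite ler01 expr1n.
by move=> x y x_le y_le; rewrite /Num.max; case: ifP.
Qed.

(* With u = 1/L, (1 - u)^2 u = (L - 1)^2 / L^3 is the Bernoulli loss q below. *)
Lemma margin_exprn_lt (R : realType) (u : R) : 0 < u -> u <= 1/2 ->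
  1 - u < (3/2 - (1 - u) ^+ 2 * u - u / 4) * (1 - (1 - u) ^+ 2 * u).
Proof. by move=> *; nra. Qed.

Lemma margin_exprn_mul_lt (R : realType) (u : R) : 0 < u -> u <= 1/2 ->
  (1 - u) ^+ 2 * u + (1 - u) * u / 2 <
  (1 - (1 - u) ^+ 2 * u - u / 4) * (1 - 2 * ((1 - u) ^+ 2 * u)).
Proof. by move=> *; nra. Qed.

Section ChainArithmetic.
Variables (R : realType) (n : nat).
Hypothesis n_gt0 : (0 < n)%N.
Let u : R := n.+1%:R^-1.
Let g : R := n%:R * u ^+ 3.
Let q : R := (1 - u) ^+ 2 * u.
(* The lower bound runs with c = b - g; q = n g is the loss in
   (c + g)^n (1 - n g) <= c^n. *)

Let u_facts : [/\ 0 < n%:R :> R, 0 < u, u <= 1/2, n%:R * u = 1 - u & q < u].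
Proof.
have u_gt0 : 0 < u by rewrite invr_gt0 ltr0n.
have u_le : u <= 1/2 by rewrite /u mul1r lef_pV2 ?posrE ?ltr0n // ler_nat ltnS.
split => //; first by rewrite ltr0n.
  by rewrite /u -natr1; field; rewrite gt_eqF // ltr_wpDl.
by rewrite /q; nra.
Qed.

Let n_eps_le (eps : R) : eps <= u ^+ 2 / 4 -> n%:R * eps <= (1 - u) * u / 4.
Proof.
have [n_pos _ _ nu _] := u_facts.
move=> eps_le; have -> : (1 - u) * u / 4 = n%:R * (u ^+ 2 / 4) by rewrite -nu; ring.
by rewrite ler_pM2l.
Qed.

Let small_case (a b k : R) : 0 <= a -> a <= Num.max 1 b -> 0 <= k ->
  b <= 1 + k / n%:R -> a ^+ n <= expR k.
Proof.
have [n_pos _ _ _ _] := u_facts.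
move=> a_ge0 a_le k_ge0 b_le; have kn_ge0 : 0 <= k / n%:R by rewrite divr_ge0 // ltW.
have : (1 + k / n%:R) ^+ n <= expR k.
  by apply: exprn_le_expR => //; rewrite (le_trans _ k_ge0) // oppr_le0.
apply: le_trans; apply: lerXn2r; rewrite ?nnegrE //; first lra.
by apply: le_trans a_le _; rewrite ge_max b_le andbT; lra.
Qed.

Let large_case (a b eps k : R) : 0 <= a -> a <= Num.max 1 b ->
  0 <= eps -> eps <= u ^+ 2 / 4 -> q + u / 4 < k -> 1 + k / n%:R < b ->
  [/\ 1 + eps <= b - g, k - q - u / 4 <= n%:R * (b - g - 1 - eps),
    b ^+ n * (1 - q) <= (b - g) ^+ n, 0 < b ^+ n & a ^+ n <= b ^+ n].
Proof.
have [n_pos u_gt0 _ nu _] := u_facts.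
move=> a_ge0 a_le eps_ge0 eps_le k_gt kb.
have nb : k < n%:R * (b - 1) by rewrite mulrC -ltr_pdivrMr //; lra.
have q_ge0 : 0 <= q by rewrite /q mulr_ge0 ?sqr_ge0 // ltW.
have b_gt1 : 1 < b by nra.
have ng : n%:R * g = q by rewrite /g /q -nu; ring.
have neps : n%:R * eps <= u / 4 by have := n_eps_le eps_le; nra.
have ny : k - q - u / 4 <= n%:R * (b - g - 1 - eps).
  have -> : n%:R * (b - g - 1 - eps) = n%:R * (b - 1) - n%:R * g - n%:R * eps by ring.
  lra.
have c_ge : 1 + eps <= b - g.
  have : 0 < n%:R * (b - g - 1 - eps) by lra.
  by rewrite pmulr_rgt0 //; lra.
split => //; last 2 first.
- by apply: exprn_gt0; lra.
- by apply: lerXn2r; rewrite ?nnegrE //; [lra | move: a_le; rewrite max_r //; lra].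
rewrite -ng -[b in b ^+ n](subrK g); apply: exprD_bernoulli_le; first lra.
by apply: mulr_ge0; [exact: ler0n | apply: exprn_ge0; exact: ltW].
Qed.

Lemma chain_exprn_lt (phi a b eps : R) :
  expR 1 ^+ 2 <= n.+1%:R * phi ^+ 2 -> 0 <= a -> a <= Num.max 1 b ->
  0 <= eps -> eps <= u ^+ 2 / 4 ->
  (1 + eps <= b - g -> (b - g) ^+ n * (b - g - 1 - eps) <= phi ^+ 2) ->
  a ^+ n < n.+1%:R * phi ^+ 2.
Proof.
have [n_pos u_gt0 u_le nu q_lt] := u_facts.
move=> e2_le a_ge0 a_le eps_ge0 eps_le chain.
have [b_le|b_gt] := lerP b (1 + (3/2) / n%:R).
  have e32 : expR (3/2) < expR 1 ^+ 2 :> R by rewrite -expRM_natl ltr_expR; lra.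
  by apply: le_lt_trans (small_case a_ge0 a_le _ b_le) _; [lra | exact: lt_le_trans e2_le].
have [|c_ge ny bern bn_gt0 an_le] := large_case a_ge0 a_le eps_ge0 eps_le _ b_gt; first lra.
move: (chain c_ge) ny bern; set c := b - g; set y := c - 1 - eps => chain_c ny bern.
have := margin_exprn_lt u_gt0 u_le; rewrite -/q => margin.
have y_gt0 : 0 < y by rewrite -(pmulr_rgt0 _ n_pos); lra.
have key : 1 < n.+1%:R * ((1 - q) * y).
  have Lu : n.+1%:R * (1 - u) = n%:R.
    by rewrite mulrBr mulr1 mulfV ?gt_eqF ?ltr0n // -natr1 addrK.
  have : 1 - u < n%:R * ((1 - q) * y) by nra.
  nra.
apply: (le_lt_trans an_le); apply: (lt_le_trans (y := n.+1%:R * y * (b ^+ n * (1 - q)))).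
  by nra.
rewrite -mulrA ler_pM2l ?ltr0n //; apply: le_trans chain_c.
by rewrite mulrC ler_pM2r.
Qed.

Lemma chain_exprn_mul_lt (phi a b beta eps : R) :
  expR 1 ^+ 2 <= n.+1%:R * phi ^+ 2 -> 0 <= a -> a <= Num.max 1 b ->
  0 <= beta -> beta <= b - 1 + eps -> 0 <= eps -> eps <= u ^+ 2 / 4 ->
  (1 + eps <= b - g -> (b - g) ^+ n * (b - g - 1 - eps) <= phi ^+ 2) ->
  a ^+ n * beta < 2 * phi ^+ 2.
Proof.
have [n_pos u_gt0 u_le nu q_lt] := u_facts.
move=> e2_le a_ge0 a_le beta_ge0 beta_le eps_ge0 eps_le chain.
have neps := n_eps_le eps_le.
have [b_le|b_gt] := lerP b (1 + 1 / n%:R).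
  have an_le := small_case a_ge0 a_le ler01 b_le.
  have e_ge2 : 2 <= expR 1 :> R by have := expR_ge1Dx (1 : R); lra.
  have nb : n%:R * (b - 1) <= 1 by rewrite mulrC -ler_pdivlMr //; lra.
  have n_beta : n%:R * beta <= 9/8 by nra.
  have n_phi : expR 1 ^+ 2 <= 2 * n%:R * phi ^+ 2.
    have : n.+1%:R <= 2 * n%:R :> R.
      by rewrite -natrM ler_nat mul2n -addnn -addn1 leq_add2l.
    by have := sqr_ge0 phi; nra.
  have : a ^+ n * (n%:R * beta) <= expR 1 * (9/8).
    by apply: ler_pM => //; [exact: exprn_ge0 | exact: mulr_ge0 (ltW n_pos) _].
  by rewrite -(ltr_pM2l n_pos); nra.
have [|c_ge ny bern bn_gt0 an_le] := large_case a_ge0 a_le eps_ge0 eps_le _ b_gt; first lra.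
move: (chain c_ge) ny bern; set c := b - g; set y := c - 1 - eps => chain_c ny bern.
have := margin_exprn_mul_lt u_gt0 u_le; rewrite -/q => margin.
have ng : n%:R * g = q by rewrite /g /q -nu; ring.
have key : y + g + 2 * eps < 2 * y * (1 - q).
  have : (1 - q - u / 4) * (1 - 2 * q) <= n%:R * y * (1 - 2 * q).
    by rewrite ler_pM2r //; lra.
  by rewrite -(ltr_pM2l n_pos); nra.
have : a ^+ n * beta <= b ^+ n * (y + g + 2 * eps).
  by apply: ler_pM; rewrite ?exprn_ge0 // /y /c; lra.
move/le_lt_trans; apply; apply: (lt_le_trans (y := 2 * y * (b ^+ n * (1 - q)))).
  by nra.
rewrite -mulrA ler_pM2l //; apply: le_trans chain_c.
by rewrite mulrC; apply: ler_wpM2r => //; rewrite /y /c; lra.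
Qed.

End ChainArithmetic.

Section EuclideanDot.
Context {R : realType} {d : nat}.
Implicit Types (x y z : 'cV[R]_d) (A : 'M[R]_d) (k : R).

Definition dot x y : R := (x^T *m y) 0 0.

Lemma dotE x y : dot x y = \sum_i x i 0 * y i 0.
Proof. by rewrite /dot mxE; apply: eq_bigr => i _; rewrite mxE. Qed.

Lemma dotC x y : dot x y = dot y x.
Proof. by rewrite !dotE; apply: eq_bigr => i _; rewrite mulrC. Qed.

Lemma dot_mulmxr x A y : dot x (A *m y) = dot (A^T *m x) y.
Proof. by rewrite /dot trmx_mul trmxK mulmxA. Qed.

Lemma dotDr x y z : dot x (y + z) = dot x y + dot x z.
Proof. by rewrite /dot mulmxDr mxE. Qed.

Lemma dotNr x y : dot x (- y) = - dot x y.
Proof. by rewrite /dot mulmxN mxE. Qed.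

Lemma dotBr x y z : dot x (y - z) = dot x y - dot x z.
Proof. by rewrite dotDr dotNr. Qed.

Lemma dotZr x k y : dot x (k *: y) = k * dot x y.
Proof. by rewrite /dot -scalemxAr mxE. Qed.

Lemma dotZl k x y : dot (k *: x) y = k * dot x y.
Proof. by rewrite dotC dotZr dotC. Qed.

Lemma dotBl x y z : dot (x - y) z = dot x z - dot y z.
Proof. by rewrite dotC dotBr !(dotC z). Qed.

Lemma dot_ge0 x : 0 <= dot x x.
Proof. by rewrite dotE sumr_ge0 // => i _; rewrite -expr2 sqr_ge0. Qed.

Lemma dot_eq0 x : dot x x = 0 -> x = 0.
Proof.
rewrite dotE => /eqP; rewrite psumr_eq0 => [/allP x0|i _]; last by rewrite -expr2 sqr_ge0.
apply/matrixP => i j; rewrite (ord1 j) mxE.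
by have /implyP/(_ isT) := x0 i (mem_index_enum i); rewrite mulf_eq0 orbb => /eqP.
Qed.

Lemma dot_scale k x : dot (k *: x) (k *: x) = k ^+ 2 * dot x x.
Proof. by rewrite dotZl dotZr mulrA -expr2. Qed.

Lemma dot_mulmx_tr A x : dot (A *m x) (A *m x) = dot x ((A^T *m A) *m x).
Proof. by rewrite dot_mulmxr dotC mulmxA. Qed.

(* Expand 0 <= |dot x x *: y - dot x y *: x|^2. *)
Lemma CauchySchwarz x y : dot x y ^+ 2 <= dot x x * dot y y.
Proof.
have [x0|] := eqVneq (dot x x) 0.
  by rewrite x0 mul0r (dot_eq0 x0) /dot trmx0 mul0mx mxE expr0n.
rewrite neq_lt ltNge dot_ge0 /= => x_pos.
have := dot_ge0 (dot x x *: y - dot x y *: x).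
rewrite !(dotBl, dotBr, dotZl, dotZr) (dotC y x) => h.
rewrite -(ler_pM2l x_pos); nra.
Qed.

Lemma vnorm2_dot x : vnorm2 x = Num.sqrt (dot x x).
Proof. by rewrite /vnorm2 dotE; congr Num.sqrt; apply: eq_bigr => i _; rewrite expr2. Qed.

Lemma vnorm2_eq1 x : (vnorm2 x = 1) <-> (dot x x = 1).
Proof.
rewrite vnorm2_dot; split => [x1|->]; last exact: sqrtr1.
by apply/eqP; rewrite -(eqr_sqrt (dot_ge0 x) ler01) x1 sqrtr1.
Qed.

End EuclideanDot.

Section SpectralNorm.
Context {R : realType} {d : nat}.
Hypothesis d_gt0 : (0 < d)%N.
Local Open Scope classical_set_scope.
Implicit Types (x y : 'cV[R]_d) (A : 'M[R]_d).

Let unit_image_norms A :=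
  [set r : R | exists x : 'cV[R]_d, vnorm2 x = 1 /\ r = vnorm2 (A *m x)].

Let e0 : 'cV[R]_d := delta_mx (Ordinal d_gt0) 0.

Let dot_e0 : dot e0 e0 = 1.
Proof. by rewrite /dot trmx_delta mul_delta_mx mxE !eqxx. Qed.

Let unit_image_norms_neq0 A : unit_image_norms A !=set0.
Proof. by exists (vnorm2 (A *m e0)), e0; rewrite vnorm2_eq1. Qed.

(* The Frobenius norm bounds every [|A x|] with [|x| = 1], row by row. *)
Let unit_image_norms_ub A : has_ubound (unit_image_norms A).
Proof.
exists (Num.sqrt (\sum_i dot (row i A)^T (row i A)^T)) => _ [x [/vnorm2_eq1 x1 ->]].
rewrite vnorm2_dot ler_sqrt ?sumr_ge0 // => [|i _]; last exact: dot_ge0.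
rewrite dotE; apply: ler_sum => i _.
have -> : (A *m x) i 0 = dot (row i A)^T x by rewrite /dot trmxK -row_mul [RHS]mxE.
by have := CauchySchwarz (row i A)^T x; rewrite x1 mulr1 -expr2.
Qed.

Lemma specnorm_ge_unit A x : dot x x = 1 -> vnorm2 (A *m x) <= specnorm A.
Proof. by move=> /vnorm2_eq1 x1; apply: (ub_le_sup (unit_image_norms_ub A)); exists x. Qed.

Lemma specnorm_ge0 A : 0 <= specnorm A.
Proof. by apply: le_trans (specnorm_ge_unit A dot_e0); rewrite vnorm2_dot sqrtr_ge0. Qed.

Lemma dot_mulmx_le_unit A x : dot x x = 1 -> dot (A *m x) (A *m x) <= specnorm A ^+ 2.
Proof.
move=> /(specnorm_ge_unit A); rewrite vnorm2_dot => le_A.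
rewrite -(sqr_sqrtr (dot_ge0 (A *m x))).
by apply: lerXn2r; rewrite ?nnegrE ?sqrtr_ge0 ?specnorm_ge0.
Qed.

Lemma dot_mulmx_le A x : dot (A *m x) (A *m x) <= specnorm A ^+ 2 * dot x x.
Proof.
have [x0|] := eqVneq (dot x x) 0.
  by rewrite x0 mulr0 (dot_eq0 x0) mulmx0 /dot trmx0 mul0mx mxE.
rewrite neq_lt ltNge dot_ge0 /= => x_pos; set k := Num.sqrt (dot x x).
have k_pos : 0 < k by rewrite sqrtr_gt0.
have kx1 : dot (k^-1 *: x) (k^-1 *: x) = 1.
  by rewrite dot_scale exprVn sqr_sqrtr ?dot_ge0 // mulVf // gt_eqF.
have := dot_mulmx_le_unit A kx1; rewrite -scalemxAr dot_scale exprVn sqr_sqrtr ?dot_ge0 //.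
by rewrite mulrC ler_pdivrMr.
Qed.

Lemma specnorm_sqr_le A M :
  (forall x, dot x x = 1 -> dot (A *m x) (A *m x) <= M) -> specnorm A ^+ 2 <= M.
Proof.
move=> le_M; have M_ge0 : 0 <= M by apply: le_trans (le_M _ dot_e0); exact: dot_ge0.
rewrite -(sqr_sqrtr M_ge0); apply: lerXn2r; rewrite ?nnegrE ?specnorm_ge0 ?sqrtr_ge0 //.
apply: ge_sup (unit_image_norms_neq0 A) _ => _ [x [/vnorm2_eq1 x1 ->]].
by rewrite vnorm2_dot ler_sqrt // le_M.
Qed.

Lemma specnorm_sqr_approx A r : r < specnorm A ^+ 2 ->
  exists x, dot x x = 1 /\ r < dot (A *m x) (A *m x).
Proof.
move=> r_lt; apply: contra_ltP r_lt => no_x; apply: specnorm_sqr_le => x x1.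
by rewrite leNgt; apply/negP => lt_r; apply: no_x; exists x.
Qed.

Lemma dot_trmx_mulmx_le A y : dot (A^T *m y) (A^T *m y) <= specnorm A ^+ 2 * dot y y.
Proof.
set s := dot (A^T *m y) (A^T *m y).
have CS : s ^+ 2 <= dot y y * (specnorm A ^+ 2 * s).
  have := CauchySchwarz y (A *m (A^T *m y)); rewrite dot_mulmxr -/s => /le_trans; apply.
  by apply: ler_wpM2l; [exact: dot_ge0 | exact: dot_mulmx_le].
have := dot_ge0 (A^T *m y); have : 0 <= specnorm A ^+ 2 * dot y y.
  by rewrite mulr_ge0 ?sqr_ge0 ?dot_ge0.
rewrite -/s; nra.
Qed.

Lemma dot_form_le A y : `|dot y (A *m y)| <= specnorm A * dot y y.
Proof.
rewrite -(ler_pXn2r (n := 2)) ?nnegrE ?normr_ge0 ?mulr_ge0 ?specnorm_ge0 ?dot_ge0 //.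
rewrite real_normK ?num_real //; apply: le_trans (CauchySchwarz _ _) _.
by have := dot_mulmx_le A y; have := dot_ge0 y; nra.
Qed.
End SpectralNorm.

Section Layers.
Context {R : realType} {d : nat}.
Hypothesis d_gt0 : (0 < d)%N.
Implicit Types (V W D : 'M[R]_d) (v w : 'cV[R]_d).

Lemma dot_mulmx_split V W w : dot (W *m w) (W *m w) =
  dot (V^T *m w) (V^T *m w) + dot w ((W^T *m W - V *m V^T) *m w).
Proof. by rewrite !dot_mulmx_tr trmxK mulmxBl dotBr addrC subrK. Qed.

Lemma dot_form_norm_le D delta w : specnorm D <= delta ->
  `|dot w (D *m w)| <= delta * dot w w.
Proof.
move=> le_delta; apply: le_trans (dot_form_le d_gt0 D w) _.
by apply: ler_wpM2r; first exact: dot_ge0.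
Qed.

Lemma dot_form_ge D delta w : specnorm D <= delta -> - delta * dot w w <= dot w (D *m w).
Proof. by move=> /(dot_form_norm_le w); rewrite mulNr ler_norml => /andP[]. Qed.

Lemma dot_form_le_delta D delta w : specnorm D <= delta -> dot w (D *m w) <= delta * dot w w.
Proof. by move=> /(dot_form_norm_le w); rewrite ler_norml => /andP[]. Qed.

Lemma dot_form_add1_ge D eps w : specnorm (1%:M + D) <= eps ->
  - (1 + eps) * dot w w <= dot w (D *m w).
Proof. by move=> /(dot_form_ge w); rewrite mulmxDl mul1mx dotDr; lra. Qed.

Lemma dot_form_add1_le D eps w : specnorm (1%:M + D) <= eps ->
  dot w (D *m w) <= (eps - 1) * dot w w.
Proof. by move=> /(dot_form_le_delta w); rewrite mulmxDl mul1mx dotDr; lra. Qed.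

Lemma specnorm_sqr_le_next V W delta :
  (forall w, dot w ((W^T *m W - V *m V^T) *m w) <= delta * dot w w) ->
  specnorm W ^+ 2 <= specnorm V ^+ 2 + delta.
Proof.
move=> ub; apply: specnorm_sqr_le => // y y1; rewrite (dot_mulmx_split V).
by have := dot_trmx_mulmx_le d_gt0 V y; have := ub y; rewrite y1 !mulr1; lra.
Qed.

Lemma dot_trmx_mulmx_ge V v k : k * dot v v <= dot (V *m v) (V *m v) ->
  k * dot (V *m v) (V *m v) <= dot (V^T *m (V *m v)) (V^T *m (V *m v)).
Proof.
have [v0|] := eqVneq (dot v v) 0.
  by rewrite (dot_eq0 v0) !mulmx0 /dot trmx0 mul0mx mxE.
rewrite neq_lt ltNge dot_ge0 /= => v_pos k_le.
have := CauchySchwarz v (V^T *m (V *m v)); rewrite dot_mulmxr trmxK.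
have := dot_ge0 (V *m v); have := dot_ge0 (V^T *m (V *m v)); nra.
Qed.

Lemma dot_mulmx_step V W delta k v :
  (forall w, - delta * dot w w <= dot w ((W^T *m W - V *m V^T) *m w)) ->
  k * dot v v <= dot (V *m v) (V *m v) ->
  (k - delta) * dot (V *m v) (V *m v) <= dot (W *m (V *m v)) (W *m (V *m v)).
Proof.
move=> lb /dot_trmx_mulmx_ge k_le; rewrite [leRHS](dot_mulmx_split V).
by have := lb (V *m v); lra.
Qed.

Section Chain.
Variables (W : nat -> 'M[R]_d) (m : nat) (delta : R).
Let D l := (W l.+1)^T *m W l.+1 - W l *m (W l)^T.
Hypothesis le_delta : forall l, (1 <= l <= m)%N -> specnorm (D l) <= delta.
Implicit Types x : 'cV[R]_d.

Lemma mxprodS_mulmx j x : mxprod W j.+1 *m x = W j.+1 *m (mxprod W j *m x).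
Proof. by rewrite /= mulmxA. Qed.

Lemma specnorm_sqr_le_drift l : (l <= m)%N ->
  specnorm (W l.+1) ^+ 2 <= specnorm (W 1%N) ^+ 2 + l%:R * delta.
Proof.
elim: l => [|l IH] l_le; first by rewrite mul0r addr0.
have := specnorm_sqr_le_next (fun w => dot_form_le_delta w (le_delta (l := l.+1) l_le)).
by have := IH (ltnW l_le); rewrite -natr1; lra.
Qed.

Lemma bigmax_specnorm_sqr_le : 0 <= delta ->
  (\big[Num.max/1]_(1 <= l < m.+2) specnorm (W l)) ^+ 2
    <= Num.max 1 (specnorm (W 1%N) ^+ 2 + m%:R * delta).
Proof.
move=> delta_ge0; rewrite big_nat_cond; apply: bigmax_sqr_le; first by rewrite le_max lexx.
case=> // l /andP[/andP[_ l_le] _]; split; first exact: specnorm_ge0.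
rewrite le_max; apply/orP; right; apply: le_trans (specnorm_sqr_le_drift l_le) _.
by rewrite lerD2l; apply: ler_wpM2r; rewrite // ler_nat.
Qed.

Lemma specnorm_last_sqr_le eps : specnorm (1%:M + D m.+1) <= eps ->
  specnorm (W m.+2) ^+ 2 <= specnorm (W 1%N) ^+ 2 + m%:R * delta - 1 + eps.
Proof.
move=> le_eps; have := specnorm_sqr_le_drift (leqnn m).
have := specnorm_sqr_le_next (fun w => dot_form_add1_le w le_eps).
lra.
Qed.

Lemma dot_mxprod_step c x :
  (c + m%:R * delta) * dot x x <= dot (W 1%N *m x) (W 1%N *m x) ->
  forall j, (j <= m)%N -> (c + (m - j)%:R * delta) * dot (mxprod W j *m x) (mxprod W j *m x)
    <= dot (mxprod W j.+1 *m x) (mxprod W j.+1 *m x).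
Proof.
move=> base; elim=> [|j IH] j_le; first by rewrite subn0 /= mulmx1 mul1mx.
have := IH (ltnW j_le); rewrite !mxprodS_mulmx => step.
have -> : c + (m - j.+1)%:R * delta = c + (m - j)%:R * delta - delta.
  by rewrite -(subnSK j_le) -natr1; ring.
apply: dot_mulmx_step step => w.
exact: dot_form_ge (le_delta (l := j.+1) j_le).
Qed.

Lemma dot_mxprod_ge c x : 0 <= c -> 0 <= delta ->
  (c + m%:R * delta) * dot x x <= dot (W 1%N *m x) (W 1%N *m x) ->
  forall j, (j <= m.+1)%N -> c ^+ j * dot x x <= dot (mxprod W j *m x) (mxprod W j *m x).
Proof.
move=> c_ge0 delta_ge0 base; elim=> [|j IH] j_le; first by rewrite /= mul1r mul1mx.
apply: le_trans (dot_mxprod_step base j_le).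
rewrite exprS -mulrA; apply: ler_pM; rewrite ?mulr_ge0 ?exprn_ge0 ?dot_ge0 ?IH 1?ltnW //.
by rewrite lerDl mulr_ge0.
Qed.

Lemma specnorm_mxprod_sqr_ge eps g : 0 <= delta ->
  specnorm (1%:M + D m.+1) <= eps -> 2 * (m%:R * delta) < g ->
  let c := specnorm (W 1%N) ^+ 2 + m%:R * delta - g in
  1 + eps <= c -> c ^+ m.+1 * (c - 1 - eps) <= specnorm (mxprod W m.+2) ^+ 2.
Proof.
move=> delta_ge0 le_eps g_gt c c_ge.
have lt_W1 : c + m%:R * delta < specnorm (W 1%N) ^+ 2 by rewrite /c; lra.
have [x [x1 base]] := specnorm_sqr_approx d_gt0 lt_W1.
have {}base : (c + m%:R * delta) * dot x x <= dot (W 1%N *m x) (W 1%N *m x).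
  by rewrite x1 mulr1 ltW.
have := dot_mulmx_le_unit d_gt0 (mxprod W m.+2) x1; apply: le_trans.
have c_ge0 : 0 <= c by have := specnorm_ge0 d_gt0 (1%:M + D m.+1); lra.
have := dot_mxprod_ge c_ge0 delta_ge0 base (leqnn m.+1); rewrite x1 mulr1.
have := dot_mxprod_step base (leqnn m); rewrite subnn mul0r addr0 mxprodS_mulmx.
move=> /(dot_mulmx_step (W := W m.+2) (delta := 1 + eps)); rewrite -!mxprodS_mulmx.
move=> /(_ (fun w => dot_form_add1_ge w le_eps)) last_step pow_le.
apply: le_trans last_step; rewrite opprD addrA mulrC.
by apply: ler_wpM2l; [lra | exact: pow_le].
Qed.

End Chain.
End Layers.

Theorem lemma7 (R : realType) (d L : nat) (W : nat -> 'M[R]_d) (delta eps : R) :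
  (1 <= d)%N -> (2 <= L)%N ->
  let alpha := \big[Num.max/1]_(1 <= l < L) specnorm (W l) in
  let beta := specnorm (W L) in
  let phi := Num.max (Num.max (specnorm (mxprod W L)) (expR 1 / Num.sqrt (L%:R))) 1 in
  let D := fun l : nat => (W l.+1)^T *m W l.+1 - W l *m (W l)^T in
  (forall l : nat, (1 <= l <= L - 2)%N -> specnorm (D l) <= delta) ->
  specnorm (1%:M + D (L - 1)%N) <= eps ->
  delta <= (2 * L%:R ^+ 3 * phi ^+ 2)^-1 ->
  eps <= (4 * L%:R ^+ 2)^-1 ->
  alpha ^+ (2 * (L - 1)) < L%:R * phi ^+ 2 /\
  alpha ^+ (2 * (L - 1)) * beta ^+ 2 < 2 * phi ^+ 2.
Proof.
move=> d_gt0; case: L => [|[|m]] // _ alpha beta phi D le_delta le_eps delta_le eps_le.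
rewrite !subSS !subn0 in le_delta le_eps *; rewrite exprM.
(* When L = 2 nothing bounds delta from below, so work with max delta 0. *)
have le_delta' l : (1 <= l <= m)%N -> specnorm (D l) <= Num.max delta 0.
  by move=> /le_delta /le_trans; apply; rewrite le_max lexx.
have delta'_ge0 : 0 <= Num.max delta 0 by rewrite le_max lexx orbT.
have phi_ge1 : 1 <= phi by rewrite le_max lexx orbT.
have e2_le : expR 1 ^+ 2 <= m.+2%:R * phi ^+ 2.
  by apply: expR1_sqr_le => //; rewrite /phi !le_max lexx orbT.
have prod_le : specnorm (mxprod W m.+2) ^+ 2 <= phi ^+ 2.
  apply: lerXn2r; rewrite ?nnegrE ?specnorm_ge0 //; first lra.
  by rewrite /phi !le_max lexx.
have eps_ge0 : 0 <= eps := le_trans (specnorm_ge0 d_gt0 _) le_eps.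
have {}eps_le : eps <= m.+2%:R^-1 ^+ 2 / 4 by rewrite exprVn mulrC -invfM.
have alpha_le := bigmax_specnorm_sqr_le d_gt0 le_delta' delta'_ge0.
have beta_le := specnorm_last_sqr_le d_gt0 le_delta' le_eps.
have chain := fun c_ge => le_trans (specnorm_mxprod_sqr_ge d_gt0 le_delta' delta'_ge0
  le_eps (max0_drift_lt phi_ge1 delta_le) c_ge) prod_le.
have := chain_exprn_lt (ltn0Sn m) e2_le (sqr_ge0 alpha) alpha_le eps_ge0 eps_le chain.
have := chain_exprn_mul_lt (ltn0Sn m) e2_le (sqr_ge0 alpha) alpha_le (sqr_ge0 beta) beta_le
  eps_ge0 eps_le chain.
by split.
Qed.
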